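(* Let $b,h,d\ge1$ be integers, let $D'$ be a digraph and $v\in V(D')$. Suppose that (1) every vertex of $D'$ reachable from $v$ has out-degree at least $(h+1)\cdot(d(2b-2)+1)+d$, and (2) the number of vertices of $D'$ at distance at most $(h+1)(2b-1)$ from $v$ is less than $d^h$. Then $D'$ contains a type-III gadget $G$ and a directed path $P_0$ from $v$ to $p(G)$ such that $V(P_0)\cap V(G)=\{p(G)\}$, $|V(G)|\le(2h+2)(2b-1)$ and $|V(P_0)|\le h(2b-1)$.
   Context: A gadget of type III (with parameter $b$) is a digraph consisting of designated vertices $p,q$, a vertex $r$, the arc $(p,q)$, and two internally vertex-disjoint directed paths $P_1,P_2$ from $p$ and from $q$ respectively to $r$, each of length at least $2b-1$; $p(G)$ denotes its vertex $p$. Distance from $v$ to $u$ means the length of a shortest directed $v$-$u$-path. *)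

(* A (finite, loopless) digraph on vertex set T is an
   irreflexive relation e : rel T ; (x,y) is an arc iff e x y. *)
From mathcomp Require Import all_boot.
Set Implicit Arguments. Unset Strict Implicit. Unset Printing Implicit Defensive.

Section Digraph.
Variables (T : finType) (e : rel T).

Definition outdeg (x : T) : nat := #|[set y | e x y]|.

(* Its length (number of arcs) is size s, its
   vertex set is x :: s. *)
Definition dipath (x : T) (s : seq T) (y : T) : bool :=
  [&& path e x s, uniq (x :: s) & last x s == y].

Definition internal (x : T) (s : seq T) (z : T) : bool :=
  [&& z \in x :: s, z != x & z != last x s].

Fixpoint dist_le (n : nat) (x y : T) : bool :=
  if n is n'.+1 then (x == y) || [exists z, e x z && dist_le n' z y]
  else x == y.

(* Type-III gadget with parameter b, with designated vertices p, q, end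
   vertex r, arc (p,q), and paths P1 = p :: s1 (from p to r) and
   P2 = q :: s2 (from q to r), internally vertex-disjoint, each of length
   at least 2b-1. *)
Definition gadget3 (b : nat) (p q r : T) (s1 s2 : seq T) : Prop :=
  [/\ e p q, dipath p s1 r, dipath q s2 r,
      (2 * b - 1 <= size s1) && (2 * b - 1 <= size s2) &
      (forall z, ~~ (internal p s1 z && (z \in q :: s2)) &&
                 ~~ (internal q s2 z && (z \in p :: s1)))].

Definition gadget_verts (p q : T) (s1 s2 : seq T) : {set T} :=
  [set z | (z \in p :: s1) || (z \in q :: s2)].

End Digraph.

(* Grow a fan from v for h rounds.  At the current vertex x the degree bound
   yields d pairwise disjoint paths of length 2b-1 avoiding every vertex used so
   far; the search recurses from their ends (the tips), now also forbidding the
   first 2b-2 vertices (the stems) of all d paths.  If the vertex sets reached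
   from two different tips meet, follow both branches from x up to the first
   vertex r of the second one lying on the first: they are internally disjoint,
   both have length at least 2b-1 because stems are forbidden, and one has length
   at least 2b because the tips are distinct.  Splitting the first arc (x, q) off
   the longer branch yields a type-III gadget with p = x, attached to the path
   from v to x.  Otherwise the reached sets are disjoint, so after h rounds d^h
   vertices lie within distance h(2b-1) of v, contradicting (2). *)

From mathcomp Require Import all_boot zify.
From Stdlib Require Import Classical_Prop.
Set Implicit Arguments. Unset Strict Implicit. Unset Printing Implicit Defensive.

Lemma leq_card_bigcup (T I : finType) (F : I -> {set T}) :
  #|\bigcup_i F i| <= \sum_i #|F i|.
Proof.
elim/big_rec2: _ => [|i A n _ leAn]; first by rewrite cards0.
by apply: leq_trans (leq_card_setU _ _).1 _; rewrite leq_add2l.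
Qed.

Section SeqIndex.
Variable T : eqType.
Implicit Types (s t : seq T) (z : T).

Lemma mem_take_index_cat s t z n :
  n <= size s -> index z (s ++ t) < n -> z \in take n s.
Proof.
move=> le_ns; rewrite in_take_leq // index_cat; case: ifP => // _; lia.
Qed.

Lemma index_cat_last x0 s t z :
  0 < size s -> index z (s ++ t) = (size s).-1 -> z = last x0 s.
Proof.
move=> s_gt0 idx_z; have z_st : z \in s ++ t by rewrite -index_mem size_cat; lia.
by rewrite -(nth_index x0 z_st) idx_z nth_cat ltn_predL s_gt0 nth_last.
Qed.

End SeqIndex.

Section Digraph.
Variables (T : finType) (e : rel T).

Lemma internal_rcons (x r z : T) s :
  internal x (rcons s r) z = [&& z \in s, z != x & z != r].
Proof.
rewrite /internal last_rcons inE mem_rcons inE.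
by case: (z =P x); case: (z =P r); rewrite ?andbF ?orbF.
Qed.

Lemma dist_le_dipath x t y n : dipath e x t y -> size t <= n -> dist_le e n x y.
Proof.
case/and3P=> pt _ /eqP <-{y}; elim: t x n pt => [|z t IH] x [|n] //=; rewrite ?eqxx //.
case/andP=> exz pt le_tn; apply/orP; right; apply/existsP; exists z.
by rewrite exz IH.
Qed.

Lemma exists_out_neighbour_notin w (G : {set T}) :
  #|G| < outdeg e w -> exists2 y, e w y & y \notin G.
Proof.
move=> ltGw; have: ~~ ([set y | e w y] \subset G).
  by apply: contraL ltGw => /subset_leq_card; rewrite leqNgt.
by case/subsetPn => y; rewrite inE; exists y.
Qed.

Section OutdegreeBound.
Variables (v : T) (M : nat).
Hypothesis outdeg_ge : forall u, connect e v u -> M <= outdeg e u.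

Lemma exists_path_avoiding n w (G : {set T}) :
  connect e v w -> w \in G -> #|G| + n <= M ->
  exists t, [/\ size t = n, path e w t, uniq t & [disjoint t & G]].
Proof.
elim: n w G => [|n IH] w G vw wG leGM; first by exists [::]; rewrite disjoint_has.
have [y ewy yNG] : exists2 y, e w y & y \notin G.
  by apply: exists_out_neighbour_notin; apply: leq_trans (outdeg_ge vw); lia.
have [|t [size_t pt ut tG]] := IH y (y |: G) (connect_trans vw (connect1 ewy)) (setU11 _ _).
  by rewrite cardsU1 yNG; lia.
exists (y :: t); rewrite /= size_t ewy pt ut disjoint_cons yNG (disjointFl tG) ?setU11 //.
by split=> //; apply: disjointWr tG; apply: subsetUr.
Qed.

Lemma exists_disjoint_paths m L x (G : {set T}) :
  connect e v x -> x \in G -> #|G| + m * L <= M ->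
  exists ss : seq (seq T), [/\ size ss = m,
    all (fun s => [&& size s == L, path e x s, uniq s & [disjoint s & G]]) ss &
    pairwise (fun s s' => [disjoint s & s']) ss].
Proof.
move=> vx; elim: m G => [|m IH] G xG leGM; first by exists [::].
have [|s [size_s ps us sG]] := exists_path_avoiding (n := L) vx xG.
  by rewrite mulSn in leGM; lia.
have [||ss [size_ss all_ss pw_ss]] := IH (G :|: [set z in s]).
- by rewrite inE xG.
- have card_s : #|[set z in s]| <= L by rewrite cardsE -size_s card_size.
  by have := (leq_card_setU G [set z in s]).1; rewrite mulSn in leGM; lia.
have sub_s : s \subset G :|: [set z in s].
  by apply/subsetP => z zs; rewrite !inE zs orbT.
exists (s :: ss); rewrite /= size_ss pw_ss size_s eqxx ps us sG /= andbT.
split=> //; apply/allP => s' /(allP all_ss) /and4P[size_s' ps' us' s'G] /=.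
  by rewrite size_s' ps' us'; apply: disjointWr s'G; apply: subsetUl.
by rewrite disjoint_sym; apply: disjointWr s'G.
Qed.

End OutdegreeBound.

Section Gadget.
Variable b : nat.
Local Notation L := (2 * b - 1).

Lemma gadget_of_fork x r a1 b1 :
  path e x (rcons a1 r) -> path e x (rcons b1 r) ->
  uniq (x :: rcons a1 r) -> uniq (x :: rcons b1 r) -> [disjoint a1 & b1] ->
  L.-1 <= minn (size a1) (size b1) -> L.-1 < maxn (size a1) (size b1) ->
  exists q s1 s2, gadget3 e b x q r s1 s2 /\
    {subset gadget_verts x q s1 s2 <= x :: rcons a1 r ++ rcons b1 r}.
Proof.
wlog long_a1 : a1 b1 / L.-1 < size a1 => [long_wlog | pa pb ua ub dab min_ab _].
  move=> pa pb ua ub dab min_ab max_ab.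
  have [] := ltnP L.-1 (size a1) => [la | la]; first exact: long_wlog.
  have lb : L.-1 < size b1 by lia.
  have dba : [disjoint b1 & a1] by rewrite disjoint_sym.
  rewrite minnC maxnC in min_ab max_ab.
  have [q [s1 [s2 [G sub]]]] := long_wlog b1 a1 lb pb pa ub ua dba min_ab max_ab.
  exists q, s1, s2; split=> // z /sub; rewrite !inE !mem_cat.
  by case: (z == x); case: (z \in rcons a1 r); case: (z \in rcons b1 r).
have lb : L.-1 <= size b1 by lia.
case: a1 long_a1 pa ua dab {min_ab} => [//|q a1] long_a1 /=.
move=> /andP[exq pa] /andP[xNa ua] dab.
exists q, (rcons b1 r), (rcons a1 r); split; last first.
  move=> z; rewrite /gadget_verts inE /= !inE !mem_cat !mem_rcons !inE.
  by case: (z == x); case: (z == r); case: (z == q); case: (z \in a1); case: (z \in b1).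
split=> //; rewrite ?size_rcons.
- by rewrite /dipath pb ub last_rcons eqxx.
- by rewrite /dipath /= pa ua last_rcons eqxx.
- by rewrite /= in long_a1; apply/andP; split; lia.
move=> z; rewrite !internal_rcons; apply/andP; split; apply/negP.
  case/andP=> /and3P[zb1 _ zr].
  by rewrite -rcons_cons mem_rcons inE (negbTE zr) (disjointFl dab zb1).
case/andP=> /and3P[za1 zq zr].
rewrite !inE mem_rcons !inE (negbTE zr) /= => /orP[/eqP zx | zb1].
  by move: xNa; rewrite inE mem_rcons inE -zx za1 !orbT.
by move: dab; rewrite disjoint_cons => /andP[_ /disjointFr/(_ za1)]; rewrite zb1.
Qed.

Lemma gadget_of_meeting_paths x s s' :
  path e x s -> path e x s' -> uniq (x :: s) -> uniq (x :: s') -> has (mem s) s' ->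
  (forall z, z \in s -> z \in s' ->
     (L.-1 <= minn (index z s) (index z s')) && (L.-1 < maxn (index z s) (index z s'))) ->
  exists q r s1 s2, gadget3 e b x q r s1 s2 /\
    {subset gadget_verts x q s1 s2 <= x :: s ++ s'}.
Proof.
move=> ps ps' us us' meet deep; case/split_find: meet ps' us' deep => r b1 b2 rs b1Ns.
case/splitPr: rs ps us b1Ns => a1 a2 ps us b1Ns ps' us' deep.
have rNa1 : r \notin a1 by move: us; rewrite /= cat_uniq /= => /and4P[_ _ /norP[]].
have rs : r \in a1 ++ r :: a2 by rewrite mem_cat inE eqxx orbT.
have rNb1 : r \notin b1 by apply: contra b1Ns => rb1; apply/hasP; exists r.
have rs' : r \in rcons b1 r ++ b2 by rewrite mem_cat mem_rcons inE eqxx.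
have /andP[min_ab max_ab] := deep r rs rs'.
rewrite cat_rcons !index_cat (negbTE rNa1) (negbTE rNb1) /= eqxx !addn0 in min_ab max_ab.
have pa : path e x (rcons a1 r) by move: ps; rewrite -cat_rcons cat_path => /andP[].
have pb : path e x (rcons b1 r) by move: ps'; rewrite cat_path => /andP[].
have ua : uniq (x :: rcons a1 r).
  by move: us; rewrite -cat_rcons -cat_cons cat_uniq => /andP[].
have ub : uniq (x :: rcons b1 r) by move: us'; rewrite -cat_cons cat_uniq => /andP[].
have dab : [disjoint a1 & b1].
  rewrite disjoint_sym disjoint_has; apply: contra b1Ns; apply: sub_has => z /= za1.
  by rewrite mem_cat za1.
have [q [s1 [s2 [G sub]]]] := gadget_of_fork pa pb ua ub dab min_ab max_ab.
exists q, r, s1, s2; split=> // z /sub; rewrite !inE !mem_cat !mem_rcons !inE.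
by case: (z == x); case: (z == r); case: (z \in a1); case: (z \in b1); rewrite ?orbT.
Qed.

End Gadget.

End Digraph.

Section GadgetSearch.
Variables (T : finType) (e : rel T) (b h d : nat) (v : T).
Hypothesis b_gt0 : 0 < b.
Local Notation L := (2 * b - 1).
(* A round forbids at most D new vertices: the d stems and one tip. *)
Local Notation D := (d * L.-1 + 1).
Hypothesis outdeg_ge : forall u, connect e v u -> h.+1 * D + d <= outdeg e u.

Definition rooted_gadget : Prop :=
  exists (p q r : T) (s1 s2 s0 : seq T),
    [/\ gadget3 e b p q r s1 s2,
        dipath e v s0 p,
        [set z | (z \in v :: s0) && (z \in gadget_verts p q s1 s2)] = [set p],
        #|gadget_verts p q s1 s2| <= (2 * h + 2) * L &
        size (v :: s0) <= h * L].

Definition reaches_avoiding (x : T) (n : nat) (F : {set T}) (u : T) : Prop :=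
  exists t, [/\ dipath e x t u, size t <= n & [disjoint t & F]].

Lemma rooted_gadget_of_gadget x s0 (F : {set T}) q r s1 s2 (s : seq T) :
  dipath e v s0 x -> {subset v :: s0 <= F} -> size s0 < h * L ->
  gadget3 e b x q r s1 s2 -> {subset gadget_verts x q s1 s2 <= x :: s} ->
  [disjoint s & F] -> (size s).+1 <= (2 * h + 2) * L ->
  rooted_gadget.
Proof.
move=> vx s0F size_s0 G sub sF size_s; exists x, q, r, s1, s2, s0; split=> //.
- apply/setP => z; rewrite in_set in_set1; apply/andP/eqP => [[zs0 /sub] | ->].
    by rewrite inE => /orP[/eqP // | zs]; move: (disjointFr sF zs); rewrite s0F.
  by case/and3P: vx => _ _ /eqP <-; rewrite mem_last !inE eqxx.
- apply: leq_trans _ size_s; apply: leq_trans (card_size (x :: s)).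
  by apply: subset_leq_card; apply/subsetP.
Qed.

Section Fan.
Variables (k : nat) (x : T) (s0 : seq T) (F : {set T}) (S : 'I_d -> seq T).
Hypotheses (vx : dipath e v s0 x) (s0F : {subset v :: s0 <= F}).
Hypotheses (card_F : #|F| + k.+1 * D <= h.+1 * D) (size_s0 : size s0 + k.+1 * L <= h * L).
Hypotheses (size_S : forall i, size (S i) = L) (path_S : forall i, path e x (S i)).
Hypotheses (uniq_S : forall i, uniq (S i)) (S_F : forall i, [disjoint S i & F]).
Hypothesis S_disj : forall i j, i != j -> [disjoint S i & S j].

Let tip i := last x (S i).
Let stem i := take L.-1 (S i).
Let stems := \bigcup_i [set z in stem i].
Let forbid i := F :|: stems :|: [set tip i].

Let x_F : x \in F.
Proof. by case/and3P: vx => _ _ /eqP <-; apply: s0F; apply: mem_last. Qed.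

Lemma tip_in i : tip i \in S i.
Proof. by rewrite /tip; case: (S i) (size_S i) => [|z s] /=; [lia | rewrite mem_last]. Qed.

Lemma stem_forbidden i j z : z \in stem i -> z \in forbid j.
Proof.
move=> zs; have z_stems : z \in stems by apply/bigcupP; exists i; rewrite ?inE.
by rewrite !inE z_stems orbT.
Qed.

Lemma card_stems : #|stems| <= d * L.-1.
Proof.
apply: leq_trans (leq_card_bigcup _) _; rewrite -[d in d * _]card_ord -sum_nat_const.
apply: leq_sum => i _; rewrite cardsE; apply: leq_trans (card_size _) _.
by rewrite size_takel // size_S leq_pred.
Qed.

Lemma stem_of_index_lt i t z : index z (S i ++ t) < L.-1 -> z \in stem i.
Proof. by apply: mem_take_index_cat; rewrite size_S leq_pred. Qed.

Lemma tip_of_index_eq i t z : index z (S i ++ t) = L.-1 -> z = tip i.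
Proof. by rewrite -(size_S i) => idx; apply: index_cat_last _ idx; rewrite size_S; lia. Qed.

Lemma fan_forbidden i : {subset x :: S i <= forbid i}.
Proof.
move=> z; rewrite inE => /orP[/eqP -> | zS]; first by rewrite !inE x_F.
have idx_lt : index z (S i ++ [::]) < L by rewrite cats0 -(size_S i) index_mem.
case: (ltngtP (index z (S i ++ [::])) L.-1) => [lt | gt | /tip_of_index_eq ->].
- exact/stem_forbidden/stem_of_index_lt/lt.
- by lia.
- by rewrite !inE eqxx orbT.
Qed.

Lemma tip_dipath i : dipath e v (s0 ++ S i) (tip i).
Proof.
case/and3P: vx => pv uv /eqP lv.
rewrite /dipath cat_path pv lv path_S last_cat lv eqxx -cat_cons cat_uniq uv uniq_S !andbT /=.
by apply/hasPn => z zS; apply/negP => /s0F; rewrite (disjointFr (S_F i) zS).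
Qed.

Lemma tip_prefix_forbidden i : {subset v :: s0 ++ S i <= forbid i}.
Proof.
move=> z; rewrite -cat_cons mem_cat => /orP[/s0F zF | zS]; first by rewrite !inE zF.
by apply: fan_forbidden; rewrite inE zS orbT.
Qed.

Lemma card_forbid i : #|forbid i| + k * D <= h.+1 * D.
Proof.
have := (leq_card_setU (F :|: stems) [set tip i]).1; have := (leq_card_setU F stems).1.
by have := card_stems; have := card_F; rewrite /forbid cards1 mulSn; lia.
Qed.

Lemma size_tip_prefix i : size (s0 ++ S i) + k * L <= h * L.
Proof. by have := size_s0; rewrite size_cat size_S mulSn; lia. Qed.

Lemma extend_from_tip i t u :
  dipath e (tip i) t u -> [disjoint t & forbid i] ->
  dipath e x (S i ++ t) u /\ [disjoint S i ++ t & F].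
Proof.
case/and3P=> pt ut /eqP <-{u} tF.
have tF0 : [disjoint t & F] by apply: disjointWr tF; apply/subsetP => z zF; rewrite !inE zF.
rewrite /dipath cat_path path_S last_cat eqxx pt disjoint_cat S_F tF0 -cat_cons cat_uniq /=.
have ut0 : uniq t by case/andP: ut.
rewrite (disjointFl (S_F i) x_F) uniq_S ut0 !andbT; split=> //.
by apply/hasPn => z zt; apply/negP => /fan_forbidden; rewrite (disjointFr tF zt).
Qed.

Lemma mem_tip_cat i t z : z \in tip i :: t -> z \in S i ++ t.
Proof. by rewrite inE mem_cat => /orP[/eqP -> | ->]; rewrite ?tip_in ?orbT. Qed.

Lemma index_common_fan_ge i j t1 t2 z : i != j -> [disjoint t2 & forbid j] ->
  z \in S j ++ t2 -> L.-1 <= index z (S i ++ t1).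
Proof.
move=> ij t2F; rewrite leqNgt; apply: contraL => /stem_of_index_lt zst.
rewrite mem_cat negb_or (disjointFr (S_disj ij) (mem_take zst)).
by rewrite (disjointFl t2F (stem_forbidden j zst)).
Qed.

Lemma fan_common_index i j t1 t2 z : i != j ->
  [disjoint t1 & forbid i] -> [disjoint t2 & forbid j] ->
  z \in S i ++ t1 -> z \in S j ++ t2 ->
  (L.-1 <= minn (index z (S i ++ t1)) (index z (S j ++ t2))) &&
  (L.-1 < maxn (index z (S i ++ t1)) (index z (S j ++ t2))).
Proof.
move=> ij t1F t2F zs zs'; have ji : j != i by rewrite eq_sym.
have ge := index_common_fan_ge t1 ij t2F zs'; have ge' := index_common_fan_ge t2 ji t1F zs.
rewrite leq_min leq_max ge ge' !ltn_neqAle ge ge' !andbT -negb_and.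
apply/negP => /andP[/eqP eq_a /eqP eq_a']; move: (disjointFr (S_disj ij) (tip_in i)).
by rewrite -(tip_of_index_eq (esym eq_a)) (tip_of_index_eq (esym eq_a')) tip_in.
Qed.

Lemma size_fan_gadget i j t1 t2 : size t1 <= k * L -> size t2 <= k * L ->
  (size ((S i ++ t1) ++ (S j ++ t2))).+1 <= (2 * h + 2) * L.
Proof. by rewrite !size_cat !size_S => ? ?; have := size_s0; lia. Qed.

Lemma size_prefix_lt : size s0 < h * L.
Proof. by have := size_s0; rewrite mulSn addnA => /(leq_trans (leq_addr _ _)); lia. Qed.

Lemma fan_collision i j t1 t2 u : i != j ->
  dipath e (tip i) t1 u -> [disjoint t1 & forbid i] -> size t1 <= k * L ->
  dipath e (tip j) t2 u -> [disjoint t2 & forbid j] -> size t2 <= k * L ->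
  rooted_gadget.
Proof.
move=> ij pt1 t1F size_t1 pt2 t2F size_t2.
have [ps sF] := extend_from_tip pt1 t1F; have [ps' s'F] := extend_from_tip pt2 t2F.
have u_s : u \in S i ++ t1.
  by apply: mem_tip_cat; case/and3P: pt1 => _ _ /eqP <-; apply: mem_last.
have u_s' : u \in S j ++ t2.
  by apply: mem_tip_cat; case/and3P: pt2 => _ _ /eqP <-; apply: mem_last.
have meet : has (mem (S i ++ t1)) (S j ++ t2) by apply/hasP; exists u.
case/and3P: ps ps' => ps us _ /and3P[ps' us' _].
have [|q [r [s1 [s2 [G sub]]]]] := gadget_of_meeting_paths (b := b) ps ps' us us' meet.
  by move=> z; apply: fan_common_index.
apply: (rooted_gadget_of_gadget vx s0F size_prefix_lt G sub).
- by rewrite disjoint_cat sF s'F.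
- exact: size_fan_gadget.
Qed.

Hypothesis IH : forall y s1 (G : {set T}),
  dipath e v s1 y -> {subset v :: s1 <= G} ->
  #|G| + k * D <= h.+1 * D -> size s1 + k * L <= h * L ->
  rooted_gadget \/ exists2 E : {set T}, d ^ k <= #|E| &
    forall u, u \in E -> reaches_avoiding y (k * L) G u.

Lemma fan_step : rooted_gadget \/ exists2 E : {set T}, d ^ k.+1 <= #|E| &
  forall u, u \in E -> reaches_avoiding x (k.+1 * L) F u.
Proof.
have [|noG] := classic rooted_gadget; [by left | right].
have reach_tip i : exists E : {set T}, d ^ k <= #|E| /\
    forall u, u \in E -> reaches_avoiding (tip i) (k * L) (forbid i) u.
  have [//|[E ? ?]] := IH (tip_dipath i) (@tip_prefix_forbidden i) (card_forbid i)
    (size_tip_prefix i).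
  by exists E.
have [E E_tip] := fin_all_exists reach_tip.
have disjE i j : i != j -> [disjoint E i & E j].
  move=> ij; apply: contraT => /pred0Pn[u /andP[/(E_tip i).2 + /(E_tip j).2]].
  move=> [t1 [pt1 size_t1 t1F]] [t2 [pt2 size_t2 t2F]].
  by case: noG; apply: (fan_collision ij pt1 t1F size_t1 pt2 t2F size_t2).
exists (\bigcup_i E i).
  rewrite -sum1_card partition_disjoint_bigcup // expnS.
  rewrite -[X in X * _](card_ord d) -sum_nat_const.
  by apply: leq_sum => i _; rewrite sum1_card; case: (E_tip i).
move=> u /bigcupP[i _ /(E_tip i).2 [t [pt size_t tF]]].
have [pst stF] := extend_from_tip pt tF.
by exists (S i ++ t); split=> //; rewrite size_cat size_S mulSn leq_add2l.
Qed.

End Fan.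

Lemma gadget_or_wide_reach k x s0 (F : {set T}) :
  dipath e v s0 x -> {subset v :: s0 <= F} ->
  #|F| + k * D <= h.+1 * D -> size s0 + k * L <= h * L ->
  rooted_gadget \/ exists2 E : {set T}, d ^ k <= #|E| &
    forall u, u \in E -> reaches_avoiding x (k * L) F u.
Proof.
elim: k x s0 F => [|k IH] x s0 F vx s0F card_F size_s0.
  right; exists [set x] => [|u]; first by rewrite cards1.
  by rewrite inE => /eqP ->; exists [::]; rewrite /dipath /= eqxx disjoint_has.
have x_F : x \in F by case/and3P: vx => _ _ /eqP <-; apply: s0F; apply: mem_last.
have v_x : connect e v x by case/and3P: vx => pv _ /eqP <-; apply/connectP; exists s0.
have [|ss [size_ss all_ss pw_ss]] :=
  @exists_disjoint_paths T e v _ outdeg_ge d L x F v_x x_F.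
  have dL : d * L = d * L.-1 + d by rewrite -mulnSr prednK //; lia.
  by have := card_F; rewrite mulSn addnA dL => /(leq_trans (leq_addr _ _)); lia.
pose S (i : 'I_d) := nth [::] ss i.
have S_prop i : [&& size (S i) == L, path e x (S i), uniq (S i) & [disjoint S i & F]].
  by apply: (allP all_ss); apply: mem_nth; rewrite size_ss.
have S_disj i j : i != j -> [disjoint S i & S j].
  have /(pairwiseP [::]) pw := pw_ss; have ord_ss (l : 'I_d) : l < size ss by rewrite size_ss.
  move=> ij; case: (ltngtP i j) => [lt | gt | /ord_inj eq_ij].
  - exact: pw (ord_ss i) (ord_ss j) lt.
  - by rewrite disjoint_sym; apply: pw (ord_ss j) (ord_ss i) gt.
  - by rewrite eq_ij eqxx in ij.
by apply: (@fan_step k x s0 F S) => // i; case/and4P: (S_prop i) => /eqP.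
Qed.

End GadgetSearch.

Theorem lemma2p11 (T : finType) (e : rel T) (b h d : nat) (v : T) :
  irreflexive e ->
  0 < b -> 0 < h -> 0 < d ->
  (forall u, connect e v u ->
     h.+1 * (d * (2 * b - 2) + 1) + d <= outdeg e u) ->
  #|[set u | dist_le e (h.+1 * (2 * b - 1)) v u]| < d ^ h ->
  exists (p q r : T) (s1 s2 s0 : seq T),
    [/\ gadget3 e b p q r s1 s2,
        dipath e v s0 p,
        [set z | (z \in v :: s0) && (z \in gadget_verts p q s1 s2)] = [set p],
        #|gadget_verts p q s1 s2| <= (2 * h + 2) * (2 * b - 1) &
        size (v :: s0) <= h * (2 * b - 1)].
Proof.
move=> _ b_gt0 _ _ outdeg_ge ball_small.
have pred_L : 2 * b - 2 = (2 * b - 1).-1 by lia.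
rewrite pred_L in outdeg_ge.
have v_dipath : dipath e v [::] v by rewrite /dipath /= eqxx.
have [|||//|[E E_big E_reach]] :=
  gadget_or_wide_reach b_gt0 outdeg_ge (k := h) v_dipath (F := [set v]).
- by move=> z; rewrite !inE.
- by rewrite cards1 mulSn leq_add2r addn1.
- by [].
suff : #|E| <= #|[set u | dist_le e (h.+1 * (2 * b - 1)) v u]|.
  by rewrite leqNgt (leq_trans ball_small E_big).
apply/subset_leq_card/subsetP => u /E_reach [t [vt size_t _]]; rewrite inE.
by apply: dist_le_dipath vt _; apply: leq_trans size_t _; rewrite leq_mul2r leqnSn orbT.
Qed.
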